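(* Let $E$ be a finite graded atomic commutative monoid of idempotents with set of atoms $A$. Then $E$ has a monoid presentation with generators $a\in A$ and relations: $ab=ba$ for $a,b\in A$; and $a_1\cdots a_k=a_1\cdots a_kb$ for all $a_1,\ldots,a_k,b\in A$ with $1\le k\le\mathrm{rk}\,E$, $\{a_1,\dots,a_k\}$ independent and $b\le a_1\vee\cdots\vee a_k$.
   Context: A finite commutative monoid of idempotents $E$ is a join-semilattice with least element $\mathbf 0$ (the identity) and greatest element $\mathbf 1$ via $x\le y\iff xy=y$, with $xy=x\vee y$. It is graded if all saturated chains $\mathbf 0=x_0<\cdots<x_k=x$ have the same length $\mathrm{rk}(x)=k$, and $\mathrm{rk}\,E=\mathrm{rk}(\mathbf 1)$; atoms are the elements of rank $1$; $E$ is atomic if every element is a join of atoms. A set $S$ of atoms is independent if $\bigvee(S\setminus\{s\})<\bigvee S$ for every $s\in S$. *)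

From mathcomp Require Import all_boot.
Unset Printing Implicit Defensive.

Section CMI.
Variables (T : finType) (op : T -> T -> T) (e : T).

Definition is_cmi : Prop :=
  [/\ associative op, commutative op, idempotent_op op & left_id e op].

Definition le (x y : T) : bool := op x y == y.
Definition lt (x y : T) : bool := le x y && (x != y).
Definition covers (x y : T) : bool :=
  lt x y && [forall z, ~~ (lt x z && lt z y)].

(* saturated chain 0 = x_0 < x_1 < ... < x_k = x, encoded as the list
   [x_1; ...; x_k] (so its length is k) *)
Definition sat_chain (x : T) (s : seq T) : bool :=
  path covers e s && (last e s == x).

Definition is_rank (x : T) (k : nat) : Prop :=
  exists s, sat_chain x s /\ size s = k.

Definition graded : Prop :=
  forall x s1 s2, sat_chain x s1 -> sat_chain x s2 -> size s1 = size s2.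

Definition atom (a : T) : Prop := is_rank a 1.

Definition joinS (S : {set T}) : T := foldr op e (enum S).

Definition top : T := joinS [set: T].

Definition atomic : Prop :=
  forall x, exists S : {set T}, (forall a, a \in S -> atom a) /\ x = joinS S.

Definition independent (S : {set T}) : Prop :=
  forall s, s \in S -> lt (joinS (S :\ s)) (joinS S).

Definition gen := {a : T | atom a}.

Definition eval (w : seq gen) : T := foldr op e (map (@proj1_sig _ _) w).

Definition rel_comm (u v : seq gen) : Prop :=
  exists a b : gen, u = [:: a; b] /\ v = [:: b; a].

Definition rel_indep (u v : seq gen) : Prop :=
  exists (as_ : seq gen) (b : gen),
    1 <= size as_ /\
    (exists r, is_rank top r /\ size as_ <= r) /\
    independent [set x | x \in map (@proj1_sig _ _) as_] /\
    le (proj1_sig b) (eval as_) /\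
    u = as_ /\ v = rcons as_ b.

Definition relations (u v : seq gen) : Prop := rel_comm u v \/ rel_indep u v.

End CMI.

Inductive cong (G : Type) (R : seq G -> seq G -> Prop) : seq G -> seq G -> Prop :=
| cong_base u v : R u v -> cong G R u v
| cong_refl u : cong G R u u
| cong_sym u v : cong G R u v -> cong G R v u
| cong_trans u v w : cong G R u v -> cong G R v w -> cong G R u w
| cong_ctx p q u v : cong G R u v -> cong G R (p ++ u ++ q) (p ++ v ++ q).

Definition presentation (T : finType) (op : T -> T -> T) (e : T)
  (R : seq (gen T op e) -> seq (gen T op e) -> Prop) : Prop :=
  (forall x : T, exists w, eval T op e w = x) /\
  (forall u v, eval T op e u = eval T op e v <-> cong _ R u v).

From Pilot Require Import Defs.
From mathcomp Require Import all_boot.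
From Stdlib Require Import Classical.
Set Implicit Arguments.
Unset Strict Implicit.
Unset Printing Implicit Defensive.

(* Commutation lets one reorder words freely, so it suffices to show that
   u ~ u b whenever the atom b lies below the value of u: then u ~ uv ~ vu ~ v
   whenever u and v have the same value.  If some letter of u lies below the
   product of the others, it can be deleted (it is absorbed by the shorter word,
   by induction).  Otherwise the letters of u are independent, and their partial
   products form a strictly increasing chain of length |u|, which refines to a
   saturated chain from 0 to 1; this bounds |u| by a rank of E and makes
   u = u b a defining relation. *)

Lemma map_eq_cat_cons (A B : Type) (f : A -> B) (u : seq A) p' b q' :
  map f u = p' ++ b :: q' ->
  exists p c q, [/\ u = p ++ c :: q, map f p = p', f c = b & map f q = q'].
Proof.
elim: p' u => [|b' p' IHp] [|c u] //= [<- fu]; first by exists [::], c, u.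
have [p [c' [q [-> <- <- <-]]]] := IHp u fu.
by exists (c :: p), c', q.
Qed.

Lemma lift_sig (A : eqType) (P : A -> Prop) (l : seq A) :
  (forall x, x \in l -> P x) -> exists w : seq {x | P x}, map sval w = l.
Proof.
elim: l => [|a l IHl] Pl; first by exists [::].
have [|w <-] := IHl; first by move=> x xl; apply: Pl; rewrite in_cons xl orbT.
by exists (exist P a (Pl a (mem_head a l)) :: w).
Qed.

#[local] Arguments cong_base {G R u v}.
#[local] Arguments cong_refl {G R u}.
#[local] Arguments cong_sym {G R u v}.
#[local] Arguments cong_trans {G R u v w}.
#[local] Arguments cong_ctx {G R} p q {u v}.

Section Presentation.
Variables (T : finType) (op : T -> T -> T) (e : T).
Hypothesis cmiE : is_cmi T op e.

Local Notation le := (le T op).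
Local Notation lt := (lt T op).
Local Notation covers := (covers T op).
Local Notation gen := (gen T op e).
Local Notation eval := (eval T op e).
Local Notation joinS := (joinS T op e).
Local Notation F := (foldr op e).
Local Notation "u ~ v" := (cong gen (relations T op e) u v) (at level 70).

Let opA : associative op. Proof. by case: cmiE. Qed.
Let opC : commutative op. Proof. by case: cmiE. Qed.
Let opxx : idempotent_op op. Proof. by case: cmiE. Qed.
Let op0x : left_id e op. Proof. by case: cmiE. Qed.

Lemma leP x y : reflect (op x y = y) (le x y).
Proof. exact: eqP. Qed.

Lemma le_refl x : le x x.
Proof. by apply/leP; rewrite opxx. Qed.

Lemma le_trans y x z : le x y -> le y z -> le x z.
Proof. by move/leP=> xy /leP yz; apply/leP; rewrite -yz opA xy. Qed.

Lemma le_anti x y : le x y -> le y x -> x = y.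
Proof. by move/leP=> xy /leP yx; rewrite -xy opC yx. Qed.

Lemma le0x x : le e x.
Proof. by apply/leP; rewrite op0x. Qed.

Lemma le_opl x y : le x (op x y).
Proof. by apply/leP; rewrite opA opxx. Qed.

Lemma le_opr x y : le y (op x y).
Proof. by rewrite opC le_opl. Qed.

Lemma le_op_lub x y z : le x z -> le y z -> le (op x y) z.
Proof. by move/leP=> xz /leP yz; apply/leP; rewrite -opA yz xz. Qed.

Lemma ltW x y : lt x y -> le x y.
Proof. by case/andP. Qed.

Lemma lt_le_trans y x z : lt x y -> le y z -> lt x z.
Proof.
case/andP=> xy /eqP x_neq_y yz; rewrite /lt (le_trans xy yz).
by apply/eqP=> xz; subst z; apply: x_neq_y; apply: le_anti.
Qed.

Lemma le_foldr l x : x \in l -> le x (F l).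
Proof.
elim: l => //= a l IHl; rewrite in_cons => /predU1P [->|/IHl xl].
  exact: le_opl.
exact: le_trans xl (le_opr _ _).
Qed.

Lemma foldr_lub l y : (forall x, x \in l -> le x y) -> le (F l) y.
Proof.
elim: l => [|a l IHl] ley /=; first exact: le0x.
apply: le_op_lub; first by rewrite ley ?mem_head.
by apply: IHl => x xl; rewrite ley // in_cons xl orbT.
Qed.

Lemma foldr_cat l1 l2 : F (l1 ++ l2) = op (F l1) (F l2).
Proof. by elim: l1 => [|a l IHl] /=; rewrite ?op0x // IHl opA. Qed.

Lemma eval_cat u v : eval (u ++ v) = op (eval u) (eval v).
Proof. by rewrite /eval map_cat foldr_cat. Qed.

Lemma le_joinS (S : {set T}) x : x \in S -> le x (joinS S).
Proof. by move=> xS; apply: le_foldr; rewrite mem_enum. Qed.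

Lemma joinS_lub (S : {set T}) y : (forall x, x \in S -> le x y) -> le (joinS S) y.
Proof. by move=> leSy; apply: foldr_lub => x; rewrite mem_enum; apply: leSy. Qed.

Lemma le_top x : le x (top T op e).
Proof. by apply: le_joinS; rewrite inE. Qed.

Lemma atom_neq0 (b : gen) : ~~ le (sval b) e.
Proof.
case: b => b [[|z [|z' s]] [chain_b //= _]]; apply/negP=> /leP.
move: chain_b; rewrite /sat_chain /= andbT => /andP [/andP [/andP [_ e_neq_z] _] /eqP zb].
by rewrite opC op0x => be; rewrite zb be eqxx in e_neq_z.
Qed.

Lemma covers_exists x y : lt x y -> exists2 z, covers x z & le z y.
Proof.
move=> xy; have Py : lt x y && le y y by rewrite xy le_refl.
(* an element of ]x, y] with the fewest elements below it covers x *)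
case: (@arg_minnP _ y (fun z => lt x z && le z y) (fun z => #|[set v | le v z]|) Py).
move=> z /andP [xz zy] zmin.
exists z => //; rewrite /Defs.covers xz; apply/forallP => w.
apply/negP=> /andP [xw wz]; have := zmin w; rewrite xw (le_trans (ltW wz) zy).
move/(_ isT); apply/negP; rewrite -ltnNge; apply: proper_card; apply/properP; split.
  by apply/subsetP => v; rewrite !inE => /le_trans; apply; apply: ltW.
exists z; rewrite !inE ?le_refl //; case/andP: wz => wz /eqP w_neq_z.
by apply/negP=> zw; apply: w_neq_z; apply: le_anti.
Qed.

Lemma saturated_path x y : le x y -> exists s, path covers x s && (last x s == y).
Proof.
have [n] := ubnP #|[set w | lt x w && le w y]|.
elim: n x => // n IHn x /ltnSE interval_le xy.
have [<-|x_neq_y] := eqVneq x y; first by exists [::]; rewrite /= eqxx.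
have [z xz zy] : exists2 z, covers x z & le z y.
  by apply: covers_exists; rewrite /lt xy x_neq_y.
have sub : [set w | lt z w && le w y] \proper [set w | lt x w && le w y].
  have xz' : lt x z by case/andP: xz.
  apply/properP; split; last by exists z; rewrite !inE ?xz' ?zy // /lt eqxx andbF.
  apply/subsetP => w; rewrite !inE => /andP [zw ->]; rewrite andbT.
  exact: lt_le_trans xz' (ltW zw).
have [|s /andP [zs lasts]] := IHn z _ zy.
  exact: leq_trans (proper_card sub) interval_le.
by exists (z :: s); rewrite /= xz zs.
Qed.

Lemma refine_chain c x y : path lt x c -> le (last x c) y ->
  exists s, [&& path covers x s, last x s == y & size c <= size s].
Proof.
elim: c x => [|z c IHc] x /=.
  by move=> _ /saturated_path [s /andP [xs lasts]]; exists s; rewrite xs lasts.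
case/andP=> xz zc lastc; have [s2 /and3P [zs2 lasts2 c_s2]] := IHc z zc lastc.
have [[|z' s1] /andP [xs1 lasts1]] := saturated_path (ltW xz).
  by move: xz; rewrite /= in lasts1; rewrite /lt (eqP lasts1) eqxx andbF.
exists ((z' :: s1) ++ s2); rewrite cat_path last_cat (eqP lasts1) xs1 zs2 lasts2.
by rewrite size_cat /= addSn ltnS (leq_trans c_s2) ?leq_addl.
Qed.

Lemma path_lt_scanl x l :
  (forall p a q, l = p ++ a :: q -> ~~ le a (op x (F (p ++ q)))) ->
  path lt x (scanl op x l).
Proof.
elim: l x => //= a l IHl x irr; apply/andP; split.
  rewrite /lt le_opl; apply/eqP=> xa; move: (irr [::] a l erefl).
  by rewrite xa /= (le_trans (le_opr x a) (le_opl _ _)).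
by apply: IHl => p b q lpq; move: (irr (a :: p) b q); rewrite lpq /= opA; apply.
Qed.

Definition irredundant (l : seq T) : Prop :=
  forall p a q, l = p ++ a :: q -> ~~ le a (F (p ++ q)).

Lemma irredundant_independent l :
  irredundant l -> independent T op e [set x | x \in l].
Proof.
move=> irr x; rewrite inE => xl; move: irr; case/splitPr: xl => p q irr; rewrite /lt.
rewrite joinS_lub => [|y]; last by rewrite !inE => /andP [_ yl]; rewrite le_joinS ?inE.
apply/eqP=> joinSx; move/negP: (irr p x q erefl); apply.
apply: (@le_trans (joinS [set y | y \in p ++ x :: q])).
  by rewrite le_joinS // inE mem_cat mem_head orbT.
rewrite -joinSx; apply: joinS_lub => y; rewrite !inE => /andP [y_neq_x yl].
by apply: le_foldr; move: yl; rewrite !mem_cat in_cons (negbTE y_neq_x).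
Qed.

Lemma irredundant_rank l :
  irredundant l -> exists r, is_rank T op e (top T op e) r /\ size l <= r.
Proof.
move=> irr; have chain : path lt e (scanl op e l).
  by apply: path_lt_scanl => p a q lpq; rewrite op0x irr.
have [s /and3P [es lasts l_s]] := refine_chain chain (le_top _).
by exists (size s); split; [exists s; rewrite /sat_chain es lasts | rewrite -(size_scanl op e)].
Qed.

Lemma redundant_or_irredundant (u : seq gen) :
  (exists p c q, u = p ++ c :: q /\ le (sval c) (eval (p ++ q))) \/
  irredundant (map sval u).
Proof.
have [|no_red] := classic (exists p c q, u = p ++ c :: q /\ le (sval c) (eval (p ++ q))).
  by left.
right=> p' a q' u_eq; have [p [c [q [upq <- <- <-]]]] := map_eq_cat_cons u_eq.
by apply/negP=> red; apply: no_red; exists p, c, q; rewrite /eval map_cat.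
Qed.

Lemma cong_ctxl p u v : u ~ v -> p ++ u ~ p ++ v.
Proof. by move=> uv; have := cong_ctx p [::] uv; rewrite !cats0. Qed.

Lemma cong_ctxr q u v : u ~ v -> u ++ q ~ v ++ q.
Proof. exact: (cong_ctx [::] q). Qed.

Lemma cong_move_last (a : gen) w : a :: w ~ rcons w a.
Proof.
elim: w => [|c w IHw] /=; first exact: cong_refl.
apply: cong_trans (cong_ctxl [:: c] IHw).
have ac : [:: a; c] ~ [:: c; a] by apply: cong_base; left; exists a, c.
exact: (cong_ctx [::] w ac).
Qed.

Lemma cong_catC u v : u ++ v ~ v ++ u.
Proof.
elim: u => [|a u IHu] /=; first by rewrite cats0; apply: cong_refl.
apply: cong_trans (cong_move_last _ _) _; rewrite -cats1.
apply: cong_trans (cong_ctxr _ IHu) _; rewrite -catA; apply: cong_ctxl.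
by apply: cong_sym; rewrite cats1; apply: cong_move_last.
Qed.

Lemma eval_rcons_le u (b : gen) : le (sval b) (eval u) -> eval (rcons u b) = eval u.
Proof. by move/leP=> bu; rewrite -cats1 eval_cat {2}/eval /= (opC _ e) op0x opC bu. Qed.

Lemma eval_cong u v : u ~ v -> eval u = eval v.
Proof.
elim=> {u v} [u v [[a [b [-> ->]]] | [w [b [_ [_ [_ [bw [-> ->]]]]]]]]
  | u | u v _ -> | u v w _ -> _ -> | p q u v _ uv] //.
- by rewrite /eval /= opA (opC (sval a)) -opA.
- by rewrite eval_rcons_le.
- by rewrite !eval_cat uv.
Qed.

Lemma cong_rcons_le u (b : gen) : le (sval b) (eval u) -> u ~ rcons u b.
Proof.
have [n] := ubnP (size u); elim: n u b => // n IHn u b /ltnSE u_le_n bu.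
have [[p [c [q [upq red]]]] | irr] := redundant_or_irredundant u.
  have pq_lt : size (p ++ q) < n by move: u_le_n; rewrite upq !size_cat addnS.
  have u_pq : u ~ p ++ q.
    rewrite upq; apply: cong_trans (cong_ctxl p (cong_move_last c q)) _.
    by rewrite -rcons_cat; apply: cong_sym; apply: IHn.
  have eval_u : eval u = eval (p ++ q) by rewrite (eval_cong u_pq).
  have pq_pqb : p ++ q ~ rcons (p ++ q) b by apply: IHn; rewrite // -eval_u.
  have pqb_ub : rcons (p ++ q) b ~ rcons u b.
    by rewrite -!cats1; apply: cong_ctxr; apply: cong_sym.
  exact: cong_trans u_pq (cong_trans pq_pqb pqb_ub).
apply: cong_base; right; exists u, b; split; last split.
- by case: u {IHn u_le_n irr} bu => // b0; move: (atom_neq0 b); rewrite b0.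
- by have [r [rk ur]] := irredundant_rank irr; exists r; rewrite -(size_map sval).
- by split; [exact: irredundant_independent | split].
Qed.

Lemma cong_cat_le u v : (forall x, x \in map sval v -> le x (eval u)) -> u ~ u ++ v.
Proof.
elim: v u => [|b v IHv] u vu; first by rewrite cats0; apply: cong_refl.
have bu : le (sval b) (eval u) by rewrite vu ?mem_head.
apply: cong_trans (cong_rcons_le bu) _; rewrite -cat_rcons; apply: IHv => x xv.
by rewrite eval_rcons_le // vu // in_cons xv orbT.
Qed.

Lemma cong_eval u v : eval u = eval v -> u ~ v.
Proof.
move=> uv; have u_uv : u ~ u ++ v by apply: cong_cat_le => x xv; rewrite uv le_foldr.
have v_vu : v ~ v ++ u by apply: cong_cat_le => x xu; rewrite -uv le_foldr.
exact: cong_trans u_uv (cong_trans (cong_catC u v) (cong_sym v_vu)).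
Qed.

End Presentation.

Theorem proposition1 (T : finType) (op : T -> T -> T) (e : T) :
  is_cmi T op e -> graded T op e -> atomic T op e ->
  presentation T op e (relations T op e).
Proof.
move=> cmiE _ atomicE; split=> [x | u v]; last first.
  by split; [exact: cong_eval | exact: eval_cong].
have [S [S_atoms ->]] := atomicE x.
have [w w_S] : exists w : seq (gen T op e), map sval w = enum S.
  by apply: lift_sig => a; rewrite mem_enum; apply: S_atoms.
by exists w; rewrite /eval w_S.
Qed.
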